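(* Let $G$ be a simple graph with at least one edge, with largest Laplacian eigenvalue $\mu_1$. Then the largest $\mathcal{H}$-eigenvalue $\lambda_1$ of $G$ satisfies $\lambda_1\le\max\{\mu_1,\,3\max_{e\in E(G)}\triangle(e)\}$.
   Context: For an oriented edge $e$ write $e^-$ for its tail and $e^+$ for its head. For distinct edges $e,e'$: $e\leftrightarrow e'$ means $e^+=e'^-$ or $e'^+=e^-$; $e\overset{\pm}{\sim}e'$ means $e^+=e'^+$ or $e^-=e'^-$; $e\vartriangle e'$ means $e,e'$ are two edges of a common triangle. $\triangle(e)$ is the number of triangles of $G$ containing $e$. The Helmholtzian matrix $\mathcal{H}(G)=(h_{ee'})$ is indexed by edges, with $h_{ee}=\triangle(e)+2$, and for $e\ne e'$: $h_{ee'}=-1$ if $e\leftrightarrow e'$ and not $e\vartriangle e'$; $h_{ee'}=1$ if $e\overset{\pm}{\sim}e'$ and not $e\vartriangle e'$; $h_{ee'}=0$ otherwise. The $\mathcal{H}$-eigenvalues are the eigenvalues of $\mathcal{H}(G)$ for an arbitrary orientation (independent of the orientation). The Laplacian matrix is $L(G)=D(G)-A(G)$. *)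

From HB Require Import structures.
From mathcomp Require Import all_boot all_order all_algebra.
Set Implicit Arguments. Unset Strict Implicit. Unset Printing Implicit Defensive.
Import Order.TTheory GRing.Theory Num.Theory.

(* A simple graph on the finite vertex type V is given by a symmetric,
   irreflexive adjacency relation [adj].  An orientation is given by a relation
   [o] such that, for every edge {u,v}, exactly one of [o u v], [o v u] holds
   (hypothesis in the theorem); the oriented edge is then (u,v) with [o u v]. *)
Definition oedge (V : finType) (adj o : rel V) :=
  {p : V * V | adj p.1 p.2 && o p.1 p.2}.

Local Open Scope ring_scope.
Section Defs.
Variables (V : finType) (adj o : rel V).
Local Notation E := (oedge adj o).

Definition etail (e : E) : V := (val e).1.
Definition ehead (e : E) : V := (val e).2.

Definition ntri (e : E) : nat :=
  (#|[set w : V | adj (etail e) w && adj (ehead e) w]|)%N.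

Definition ends (e : E) : {set V} := [set etail e; ehead e].

Definition etri (e e' : E) : bool :=
  [&& e != e', #|ends e :|: ends e'| == 3 &
      [forall x in ends e :|: ends e', forall y in ends e :|: ends e',
          (x != y) ==> adj x y]].

Definition econs (e e' : E) : bool :=
  (ehead e == etail e') || (ehead e' == etail e).

Definition esame (e e' : E) : bool :=
  (ehead e == ehead e') || (etail e == etail e').

Definition hentry (R : pzRingType) (e e' : E) : R :=
  if e == e' then (ntri e + 2)%N%:R
  else if econs e e' && ~~ etri e e' then -1
  else if esame e e' && ~~ etri e e' then 1
  else 0.

Definition Helmholtzian (R : pzRingType) : 'M[R]_#|{: E}| :=
  \matrix_(i, j) hentry R (enum_val i) (enum_val j).

Definition vdeg (v : V) : nat := #|[set w : V | adj v w]|.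

Definition Laplacian (R : pzRingType) : 'M[R]_#|{: V}| :=
  \matrix_(i, j) ((if i == j then (vdeg (enum_val i))%:R else 0)
                  - (if adj (enum_val i) (enum_val j) then 1 else 0)).

End Defs.

From HB Require Import structures.
From mathcomp Require Import all_boot all_order all_algebra.
From mathcomp.algebra_tactics Require Import ring.
Set Implicit Arguments. Unset Strict Implicit. Unset Printing Implicit Defensive.
Import Order.TTheory GRing.Theory Num.Theory.
Local Open Scope ring_scope.

(* With B the vertex-edge incidence matrix of the orientation, L = B B^T and
   H = B^T B + T, where T keeps the triangle counts on the diagonal and cancels
   the entries of B^T B between two edges of a common triangle.  Summing over the
   apexes of the triangles through an edge gives T B^T = 0, hence H B^T = B^T L.
   So if x is a left eigenvector of H for lambda, either x B^T is a left
   eigenvector of L for lambda, or x B^T = 0, x T = lambda x, and |lambda| is at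
   most a column sum of |T|, which is 3 triangle(e).  The bound thus holds for
   every H-eigenvalue, not only the largest one. *)

Lemma eigenvalue_intertwined (F : fieldType) m n (A : 'M[F]_m) (M : 'M[F]_n)
    (C : 'M[F]_(m, n)) (x : 'rV_m) (a : F) :
  A *m C = C *m M -> x *m A = a *: x -> x *m C != 0 -> eigenvalue M a.
Proof.
move=> AC xA xC; apply/eigenvalueP; exists (x *m C) => //.
by rewrite -mulmxA -AC mulmxA xA scalemxAl.
Qed.

Lemma eigenvalue_norm_le_col_sum (R : realDomainType) n (A : 'M[R]_n)
    (x : 'rV_n) (a : R) :
  x *m A = a *: x -> x != 0 -> exists j, `|a| <= \sum_i `|A i j|.
Proof.
move=> xA; case/rV0Pn => i0 xi0.
have [j _ xj_max] := @arg_maxP _ _ _ i0 xpredT (fun i => `|x 0 i|) isT.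
exists j.
have xj_gt0 : 0 < `|x 0 j| by apply: lt_le_trans (xj_max i0 isT); rewrite normr_gt0.
rewrite -(ler_pM2r xj_gt0) -normrM.
have -> : a * x 0 j = \sum_i x 0 i * A i j.
  by move/rowP/(_ j): xA; rewrite !mxE => <-.
rewrite mulr_suml; apply: le_trans (ler_norm_sum _ _ _) _.
apply: ler_sum => i _; rewrite normrM mulrC ler_wpM2l //.
exact: xj_max.
Qed.

Lemma sum_eq_natr_mul {R : pzSemiRingType} {T : finType} (a : T) (F : T -> R) :
  \sum_t (t == a)%:R * F t = F a.
Proof.
rewrite (bigD1 a) //= eqxx mul1r big1 ?addr0 // => t /negbTE ->.
by rewrite mul0r.
Qed.

Lemma sum_enum_val {R : nmodType} {T : finType} (F : T -> R) :
  \sum_(i < #|{: T}|) F (enum_val i) = \sum_t F t.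
Proof. by rewrite -(big_enum_val F). Qed.

Section Graph.
Variables (V : finType) (adj o : rel V).
Hypothesis adj_sym : symmetric adj.
Hypothesis adj_irr : irreflexive adj.
Hypothesis o_orient : forall u v : V, adj u v -> o u v = ~~ o v u.
Local Notation E := (oedge adj o).

Lemma oedge_adj (e : E) : adj (etail e) (ehead e).
Proof. by case/andP: (valP e). Qed.

Lemma oedge_o (e : E) : o (etail e) (ehead e).
Proof. by case/andP: (valP e). Qed.

Lemma etail_neq_ehead (e : E) : etail e != ehead e.
Proof. by apply/eqP => h; have := oedge_adj e; rewrite h adj_irr. Qed.

Lemma oedge_inj (e e' : E) : etail e = etail e' -> ehead e = ehead e' -> e = e'.
Proof.
rewrite /etail /ehead => h1 h2; apply: val_inj.
by case: (val e) (val e') h1 h2 => [a c] [a' c'] /= -> ->.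
Qed.

Lemma oedge_not_rev (e e' : E) : etail e = ehead e' -> ehead e = etail e' -> False.
Proof.
move=> h1 h2; have := oedge_o e; have := oedge_o e'.
by rewrite h1 h2 (o_orient (oedge_adj e')) => /negP.
Qed.

Lemma sum_oedge_pairs {R : nmodType} (f : V -> V -> R) :
  \sum_(e : E) f (etail e) (ehead e) =
  \sum_a \sum_c (if adj a c && o a c then f a c else 0).
Proof.
rewrite pair_bigA /= -big_mkcond /=.
rewrite (reindex_omap (val : E -> V * V) insub); last by move=> p Pp; rewrite insubT.
by apply: eq_bigl => e; rewrite (valP e) valK eqxx.
Qed.

Lemma sum_oedge_both {R : pzSemiRingType} (f : V -> V -> R) :
  \sum_(e : E) (f (etail e) (ehead e) + f (ehead e) (etail e)) =
  \sum_a \sum_c (adj a c)%:R * f a c.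
Proof.
rewrite big_split /= (sum_oedge_pairs f) (sum_oedge_pairs (fun a c => f c a)).
rewrite [X in _ + X]exchange_big -big_split /=; apply: eq_bigr => a _.
rewrite -big_split /=; apply: eq_bigr => c _.
rewrite [adj c a]adj_sym; case: (boolP (adj a c)) => [ac | _]; last by rewrite add0r mul0r.
by rewrite (@o_orient c a) ?(adj_sym c) //; case: (o a c); rewrite /= ?addr0 ?add0r mul1r.
Qed.

Variable R : numDomainType.

Definition incid (v : V) (e : E) : R := (v == ehead e)%:R - (v == etail e)%:R.

Definition edot (e e' : E) : R := \sum_v incid v e * incid v e'.

Lemma incid_head (e : E) : incid (ehead e) e = 1.
Proof. by rewrite /incid eqxx eq_sym (negbTE (etail_neq_ehead e)) subr0. Qed.

Lemma incid_tail (e : E) : incid (etail e) e = -1.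
Proof. by rewrite /incid eqxx (negbTE (etail_neq_ehead e)) sub0r. Qed.

Lemma incid_off (v : V) (e : E) : v != etail e -> v != ehead e -> incid v e = 0.
Proof. by move=> /negbTE vt /negbTE vh; rewrite /incid vt vh subrr. Qed.

Lemma edotE (e e' : E) : edot e e' = incid (ehead e) e' - incid (etail e) e'.
Proof.
rewrite /edot; under eq_bigr => v _ do rewrite [incid v e]/incid mulrBl.
by rewrite sumrB !sum_eq_natr_mul.
Qed.

Lemma edotC (e e' : E) : edot e e' = edot e' e.
Proof. by apply: eq_bigr => v _; rewrite mulrC. Qed.

Lemma edotii (e : E) : edot e e = 2.
Proof. by rewrite edotE incid_head incid_tail opprK. Qed.

Lemma vdeg_natr (u : V) : (vdeg adj u)%:R = \sum_w (adj u w)%:R :> R.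
Proof.
rewrite /vdeg -sum1_card natr_sum big_mkcond /=.
by apply: eq_bigr => w _; rewrite inE; case: adj.
Qed.

Lemma sum_incid_mul (u v : V) :
  \sum_(e : E) incid u e * incid v e = (u == v)%:R * (vdeg adj u)%:R - (adj u v)%:R.
Proof.
pose f a c : R := (a == u)%:R * ((v == a)%:R - (v == c)%:R).
have -> : \sum_(e : E) incid u e * incid v e =
          \sum_(e : E) (f (etail e) (ehead e) + f (ehead e) (etail e)).
  by apply: eq_bigr => e _; rewrite /f /incid [ehead e == u]eq_sym [etail e == u]eq_sym; ring.
rewrite sum_oedge_both.
under eq_bigr => a _ do under eq_bigr => c _ do rewrite /f mulrCA.
under eq_bigr => a _ do rewrite -mulr_sumr.
rewrite sum_eq_natr_mul vdeg_natr mulr_sumr.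
under eq_bigr => c _ do rewrite mulrBr.
rewrite sumrB -(sum_eq_natr_mul v (fun c => (adj u c)%:R)).
by congr (_ - _); apply: eq_bigr => c _; rewrite mulrC eq_sym.
Qed.

Ltac elim_neq := repeat match goal with
  | H : is_true (?x != ?y) |- context [?x == ?y] => rewrite (negbTE H)
  | H : is_true (?x != ?y) |- context [?y == ?x] => rewrite [y == x]eq_sym (negbTE H)
  end.

Lemma edot_offdiag (e e' : E) : e != e' ->
  edot e e' = if econs e e' then -1 else if esame e e' then 1 else 0.
Proof.
move=> ee'; rewrite edotE /incid /econs /esame.
have same : etail e = etail e' -> ehead e = ehead e' -> False.
  by move=> t h; move/eqP: ee'; apply; apply: oedge_inj.
have := @oedge_not_rev e e'; move: same (etail_neq_ehead e) (etail_neq_ehead e').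
move: (etail e) (ehead e) (etail e') (ehead e') => a c a' c' same ac a'c' rev.
have [?|cc'] := eqVneq c c'; have [?|ca'] := eqVneq c a';
have [?|ac'] := eqVneq a c'; have [?|aa'] := eqVneq a a'; subst; rewrite ?eqxx //=;
try by [exfalso; apply: same | exfalso; apply: rev | rewrite eqxx in ac | rewrite eqxx in a'c'];
elim_neq; rewrite /=; ring.
Qed.

Definition htri (e e' : E) : R :=
  (e == e')%:R * (ntri e)%:R - (etri e e')%:R * edot e e'.

Lemma etri_irr (e : E) : etri e e = false.
Proof. by rewrite /etri eqxx. Qed.

Lemma etriC (e e' : E) : etri e e' = etri e' e.
Proof. by rewrite /etri eq_sym setUC. Qed.

Lemma hentry_edot_htri (e e' : E) : hentry R e e' = edot e e' + htri e e'.
Proof.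
rewrite /hentry /htri; have [<-|ee'] := eqVneq e e'.
  by rewrite etri_irr edotii natrD mul1r mul0r subr0 addrC.
rewrite mul0r sub0r; case: (etri e e') => /=; first by rewrite !andbF mul1r subrr.
by rewrite !andbT mul0r oppr0 addr0 edot_offdiag.
Qed.

Definition tri_pair (p q a c : V) : bool :=
  ((a == p) || (a == q)) && (adj p c && adj q c) ||
  ((c == p) || (c == q)) && (adj p a && adj q a).

Lemma natr_eq_or (x p q : V) : p != q ->
  ((x == p) || (x == q))%:R = (x == p)%:R + (x == q)%:R :> R.
Proof. by move=> pq; have [->|] := eqVneq x p; rewrite ?(negbTE pq) ?addr0 ?add0r. Qed.

Lemma tri_pair_natr (p q a c : V) : p != q ->
  let g x y := ((x == p)%:R + (x == q)%:R) * (adj p y && adj q y)%:R in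
  (tri_pair p q a c)%:R = g a c + g c a :> R.
Proof.
move=> pq g; rewrite /g -!natr_eq_or // /tri_pair.
have out x : adj p x && adj q x -> (x == p) || (x == q) = false.
  by case/andP=> px qx; apply/norP; split; apply/eqP=> xpq; rewrite xpq adj_irr in px qx.
case: (boolP (adj p c && adj q c)) => [cn | _].
  by rewrite (out c cn) andbT /= orbF mulr1 mul0r addr0.
rewrite andbF mulr0 add0r /=.
by case: (boolP (adj p a && adj q a)) => [cn | _]; rewrite ?(out a cn) ?andbT ?andbF ?mulr1 ?mulr0.
Qed.

Lemma triangle_setE (S : {set V}) (x y z : V) :
  S =i [:: x; y; z] -> uniq [:: x; y; z] ->
  (#|S| == 3) && [forall u in S, forall w in S, (u != w) ==> adj u w] =
  [&& adj x y, adj y z & adj x z].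
Proof.
move=> SE Su; rewrite (eq_card SE) (card_uniqP Su) eqxx /=.
apply/idP/idP => [/forall_inP S_clique | /and3P[xy yz xz]].
  have adjS u w : u \in S -> w \in S -> u != w -> adj u w.
    by move=> uS wS; move/forall_inP: (S_clique u uS) => /(_ w wS)/implyP.
  move: Su; rewrite /= !inE !negb_or => /and3P[/andP[xy xz] yz _].
  by rewrite !adjS ?SE ?inE ?eqxx ?orbT.
apply/forall_inP => u; rewrite SE !inE => uS; apply/forall_inP => w.
rewrite SE !inE => wS; apply/implyP.
by case/or3P: uS => /eqP->; case/or3P: wS => /eqP->; rewrite ?eqxx // => _; rewrite // adj_sym.
Qed.

Lemma etriE (e' e : E) :
  etri e' e = tri_pair (etail e') (ehead e') (etail e) (ehead e).
Proof.
have [<-|ne] := eqVneq e' e; first by rewrite etri_irr /tri_pair !adj_irr /= !andbF.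
rewrite /etri ne /= /ends.
have same : etail e' = etail e -> ehead e' = ehead e -> False.
  by move=> h1 h2; move/eqP: ne; apply; apply: oedge_inj.
move: same (@oedge_not_rev e' e) (etail_neq_ehead e) (etail_neq_ehead e').
move: (oedge_adj e) (oedge_adj e').
move: (etail e) (ehead e) (etail e') (ehead e') => a c p q ac_adj pq_adj same rev ac pq.
rewrite /tri_pair.
have [ap|ap] := eqVneq a p.
  subst a; have qc : q != c by apply/eqP => qc; apply: same.
  rewrite (@triangle_setE _ p q c); first by rewrite pq_adj ac_adj adj_irr /= andbT andbF orbF.
    by move=> u; rewrite !inE; repeat case: eqP.
  by rewrite /= !inE !negb_or pq ac qc.
have [aq|aq] := eqVneq a q.
  subst a; have pc : p != c by apply/eqP => pc; apply: rev.
  rewrite (@triangle_setE _ p q c); first by rewrite pq_adj ac_adj adj_irr /= andbF orbF andbC.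
    by move=> u; rewrite !inE; repeat case: eqP.
  by rewrite /= !inE !negb_or pq pc ac.
have [cp|cp] := eqVneq c p.
  subst c; rewrite (@triangle_setE _ p q a).
  - by rewrite pq_adj [adj p a]adj_sym ac_adj adj_irr /= ?andbT ?andbF.
  - by move=> u; rewrite !inE; repeat case: eqP.
  by rewrite /= !inE !negb_or pq ![_ == a]eq_sym ap aq.
have [cq|cq] := eqVneq c q.
  subst c; rewrite (@triangle_setE _ p q a).
  - by rewrite pq_adj [adj q a]adj_sym ac_adj adj_irr /= ?andbT ?andbF.
  - by move=> u; rewrite !inE; repeat case: eqP.
  by rewrite /= !inE !negb_or pq ![_ == a]eq_sym ap aq.
rewrite (eq_card (_ : _ =i [:: p; q; a; c])); last by move=> u; rewrite !inE; repeat case: eqP.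
rewrite (card_uniqP _) /= ?(negbTE ap) ?(negbTE aq) ?(negbTE cp) ?(negbTE cq) //.
by rewrite !inE !negb_or pq ac ![_ == a]eq_sym ![_ == c]eq_sym ap aq cp cq.
Qed.

Lemma sum_etri (e' : E) (F : V -> V -> R) : (forall a c, F a c = F c a) ->
  \sum_(e : E) (etri e' e)%:R * F (etail e) (ehead e) =
  \sum_w (adj (etail e') w && adj (ehead e') w)%:R * (F (etail e') w + F (ehead e') w).
Proof.
move=> Fsym; under eq_bigr => e _ do rewrite etriE.
move: (etail e') (ehead e') (etail_neq_ehead e') => p q pq.
pose cn x : R := (adj p x && adj q x)%:R.
pose f a c := ((a == p)%:R + (a == q)%:R) * (cn c * F a c).
transitivity (\sum_(e : E) (f (etail e) (ehead e) + f (ehead e) (etail e))).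
  by apply: eq_bigr => e _; rewrite (tri_pair_natr _ _ pq) /f /cn [F (ehead e) _]Fsym; ring.
rewrite sum_oedge_both.
under eq_bigr => a _ do under eq_bigr => c _ do rewrite /f mulrCA.
under eq_bigr => a _ do rewrite -mulr_sumr mulrDl.
rewrite big_split /= !sum_eq_natr_mul -big_split /=.
apply: eq_bigr => c _; rewrite /cn.
by case: (adj p c); case: (adj q c); rewrite /= ?mul1r ?mul0r ?addr0 ?mulrDr.
Qed.

Lemma ntri_natr (e : E) :
  (ntri e)%:R = \sum_w (adj (etail e) w && adj (ehead e) w)%:R :> R.
Proof.
rewrite /ntri -sum1_card natr_sum big_mkcond /=.
by apply: eq_bigr => w _; rewrite inE; case: (_ && _).
Qed.

Lemma incid_apex {e : E} {w : V} :
  adj (etail e) w -> adj (ehead e) w -> incid w e = 0.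
Proof.
move=> tw hw; apply: incid_off.
  by apply: contraTneq tw => ->; rewrite adj_irr.
by apply: contraTneq hw => ->; rewrite adj_irr.
Qed.

Lemma sum_etri_edot_incid (e' : E) (v : V) :
  \sum_(e : E) (etri e' e)%:R * (edot e' e * incid v e) = (ntri e')%:R * incid v e'.
Proof.
pose F a c := (incid c e' - incid a e') * ((v == c)%:R - (v == a)%:R).
rewrite (eq_bigr (fun e => (etri e' e)%:R * F (etail e) (ehead e))); last first.
  by move=> e _; rewrite edotC edotE.
rewrite sum_etri; last by move=> a c; rewrite /F; ring.
rewrite ntri_natr mulr_suml; apply: eq_bigr => w _.
case: (boolP (adj _ w && adj _ w)) => [/andP[tw hw] | _]; last by rewrite !mul0r.
by rewrite /F (incid_apex tw hw) incid_tail incid_head /incid; ring.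
Qed.

Lemma sum_etri_norm_edot (e' : E) :
  \sum_(e : E) (etri e' e)%:R * `|edot e' e| = 2 * (ntri e')%:R.
Proof.
pose F a c := `|incid c e' - incid a e'|.
rewrite (eq_bigr (fun e => (etri e' e)%:R * F (etail e) (ehead e))); last first.
  by move=> e _; rewrite edotC edotE.
rewrite sum_etri; last by move=> a c; rewrite /F distrC.
rewrite ntri_natr mulr_sumr; apply: eq_bigr => w _.
case: (boolP (adj _ w && adj _ w)) => [/andP[tw hw] | _]; last by rewrite !mul0r mulr0.
by rewrite /F (incid_apex tw hw) incid_tail incid_head !sub0r opprK normrN normr1 mul1r mulr1.
Qed.

Definition incidence : 'M[R]_(#|{: V}|, #|{: E}|) :=
  \matrix_(i, j) incid (enum_val i) (enum_val j).

Definition Htri : 'M[R]_#|{: E}| := \matrix_(i, j) htri (enum_val i) (enum_val j).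

Lemma Laplacian_incidence : Laplacian adj R = incidence *m incidence^T.
Proof.
apply/matrixP => i j; rewrite !mxE.
under eq_bigr => k _ do rewrite !mxE.
rewrite (sum_enum_val (fun e => incid _ e * incid _ e)) sum_incid_mul.
by rewrite (inj_eq enum_val_inj); case: (i == j); case: adj; rewrite ?mul1r ?mul0r.
Qed.

Lemma Helmholtzian_incidence :
  Helmholtzian adj o R = incidence^T *m incidence + Htri.
Proof.
apply/matrixP => i j; rewrite !mxE hentry_edot_htri; congr (_ + _).
under [RHS]eq_bigr => k _ do rewrite !mxE.
by rewrite (sum_enum_val (fun v => incid v _ * incid v _)).
Qed.

Lemma Htri_incidence : Htri *m incidence^T = 0.
Proof.
apply/matrixP => i j; rewrite !mxE.
under eq_bigr => k _ do rewrite !mxE.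
rewrite (sum_enum_val (fun e => htri _ e * incid _ e)).
under eq_bigr => e _ do rewrite /htri mulrBl -!mulrA eq_sym.
by rewrite sumrB sum_eq_natr_mul sum_etri_edot_incid subrr.
Qed.

Lemma Helmholtzian_incidence_intertwine :
  Helmholtzian adj o R *m incidence^T = incidence^T *m Laplacian adj R.
Proof.
by rewrite Helmholtzian_incidence mulmxDl Htri_incidence addr0 Laplacian_incidence mulmxA.
Qed.

Lemma Htri_col_norm_sum (j : 'I_#|{: E}|) :
  \sum_i `|Htri i j| = (3 * ntri (enum_val j))%:R.
Proof.
under eq_bigr => i _ do rewrite mxE.
rewrite (sum_enum_val (fun e => `|htri e _|)).
move: (enum_val j) => e0.
transitivity (\sum_e ((e == e0)%:R * (ntri e0)%:R + (etri e0 e)%:R * `|edot e0 e|)).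
  apply: eq_bigr => e _; rewrite /htri etriC edotC.
  have [->|ne] := eqVneq e e0; first by rewrite etri_irr !mul0r subr0 mul1r addr0 normr_nat.
  by rewrite !mul0r sub0r add0r normrN normrM normr_nat.
by rewrite big_split /= sum_eq_natr_mul sum_etri_norm_edot natrM; ring.
Qed.

End Graph.

Theorem corollary5p3 (R : rcfType) (V : finType) (adj o : rel V)
  (adj_sym : symmetric adj) (adj_irr : irreflexive adj)
  (o_orient : forall u v : V, adj u v -> o u v = ~~ o v u)
  (has_edge : exists u v : V, adj u v)
  (lam1 mu1 : R)
  (lam1_eig : eigenvalue (Helmholtzian adj o R) lam1)
  (lam1_max : forall x : R, eigenvalue (Helmholtzian adj o R) x -> x <= lam1)
  (mu1_eig : eigenvalue (Laplacian adj R) mu1)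
  (mu1_max : forall x : R, eigenvalue (Laplacian adj R) x -> x <= mu1) :
  lam1 <= Num.max mu1 ((3 * \max_(e : oedge adj o) ntri e)%N)%:R.
Proof.
case/eigenvalueP: lam1_eig => x xH x0.
have [xB0 | xB] := eqVneq (x *m (incidence adj o R)^T) 0; last first.
  have intertwine := Helmholtzian_incidence_intertwine adj_sym adj_irr o_orient R.
  by rewrite le_max mu1_max // (eigenvalue_intertwined intertwine xH xB).
have xHtri : x *m Htri adj o R = lam1 *: x.
  by rewrite -xH (Helmholtzian_incidence adj_irr o_orient) mulmxDr mulmxA xB0 mul0mx add0r.
have [j lam1_le] := eigenvalue_norm_le_col_sum xHtri x0.
rewrite (Htri_col_norm_sum adj_sym adj_irr o_orient) in lam1_le.
rewrite le_max; apply/orP; right; apply: le_trans (ler_norm _) (le_trans lam1_le _).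
by rewrite ler_nat leq_mul2l /= (leq_bigmax (F := fun e : oedge adj o => ntri e)).
Qed.
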